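(* Let $r\geq 3$ and let $G_1$ be the pan graph with vertex set $\{u_0,u_1,\dots,u_r\}$ and edge set $$E(G_1)=\{u_0u_r,\ u_1u_2,\ u_{r-1}u_r\}\cup\{u_ju_{j+2}: 1\le j\le r-2\}$$ (so $u_1,\dots,u_r$ span a cycle of length $r$ and $u_0$ is a pendant vertex attached to $u_r$). Let $H_0,H_1,\dots,H_r$ be connected graphs, each with at least two vertices, with $n_i=|V(H_i)|$, ordered so that $n_0\le n_1\le\dots\le n_r$. Let $\Gamma=G_1\diamond(H_0,H_1,\dots,H_r)$ be the generalized edge corona in which every vertex of $H_0$ is joined to $u_0$ and $u_r$, every vertex of $H_1$ is joined to $u_1$ and $u_2$, for each $j\in\{1,\dots,r-2\}$ every vertex of $H_{j+1}$ is joined to $u_j$ and $u_{j+2}$, and every vertex of $H_r$ is joined to $u_{r-1}$ and $u_r$. Suppose that (a) $\Delta(H_0)<\delta(H_1)$; (b) $\Delta(H_i)\le\delta(H_{i+1})$ for all $i\in\{1,\dots,r-1\}$; (c) $d'(u_0)\le\delta'(H_i)$ for all $i\in\{0,1,\dots,r\}$; (d) $\Delta'(H_r)\le d'(u_1)$. Then $\Gamma$ is antimagic.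
   Context: All graphs are simple and undirected. A graph $G$ is antimagic if there is a bijection $f:E(G)\to\{1,2,\dots,|E(G)|\}$ such that the vertex sums $w(v)=\sum_{e\ni v}f(e)$ are pairwise distinct over all vertices $v$. For a graph $G$ with $m$ edges $e_1,\dots,e_m$ and graphs $H_1,\dots,H_m$, the generalized edge corona $G\diamond(H_1,\dots,H_m)$ is obtained from disjoint copies of $G,H_1,\dots,H_m$ by joining both end vertices of $e_i$ to every vertex of $H_i$, for each $i$. $\Delta(H)$ and $\delta(H)$ denote the maximum and minimum degree of $H$ itself. For a vertex $v$ of $\Gamma$, $d'(v)$ denotes its degree in $\Gamma$; $\Delta'(H_i)$ and $\delta'(H_i)$ denote the maximum and minimum of $d'(v)$ over $v\in V(H_i)$ (so $d'(v)=\deg_{H_i}(v)+2$ for $v\in V(H_i)$). *)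

From mathcomp Require Import all_boot.
Set Implicit Arguments. Unset Strict Implicit. Unset Printing Implicit Defensive.

Section Graph.
Variable T : finType.
Variable adj : rel T.

Definition simple_graph := symmetric adj /\ irreflexive adj.

Definition edges : {set {set T}} := [set e : {set T} | [exists x : T, exists y : T, adj x y && (e == [set x; y])]].

Definition deg (v : T) : nat := #|[set y | adj v y]|.

Definition connected_graph := forall x y : T, connect adj x y.

(* maximum / minimum degree (T nonempty for the minimum to be meaningful) *)
Definition maxdeg : nat := \max_(x : T) deg x.
Definition mindeg : nat := \big[minn/#|T|]_(x : T) deg x.

(* antimagic: a bijection f : E -> {1,...,|E|} (f injective on E with values in
   [1,|E|]) such that the vertex sums w(v) = sum_{e ∋ v} f(e) are pairwise distinct *)
Definition vsum (f : {set T} -> nat) (v : T) : nat := \sum_(e in edges | v \in e) f e.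

Definition antimagic : Prop :=
  exists f : {set T} -> nat,
    [/\ {in edges &, injective f},
        {in edges, forall e, 1 <= f e <= #|edges|} &
        injective (vsum f)].
End Graph.

Definition upair (a b c d : nat) : bool := ((a == c) && (b == d)) || ((a == d) && (b == c)).

Definition pan_adj (r : nat) (a b : nat) : bool :=
  [|| upair a b 0 r, upair a b 1 2, upair a b r.-1 r
    | [exists j : 'I_r.+1, (1 <= j <= r - 2) && upair a b j (j + 2)]].

Definition attach_edge (r i : nat) : nat * nat :=
  if i == 0 then (0, r)
  else if i == 1 then (1, 2)
  else if i == r then (r.-1, r)
  else (i.-1, i.+1).

Definition attached (r i a : nat) : bool :=
  (a == (attach_edge r i).1) || (a == (attach_edge r i).2).

Section Corona.
Variable r : nat.
Variable n : 'I_r.+1 -> nat.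
Variable H : forall i : 'I_r.+1, rel 'I_(n i).

(* vertices: inl u_a, or inr (i, x) = vertex x of the copy of H_i *)
Definition cvert : finType := ('I_r.+1 + {i : 'I_r.+1 & 'I_(n i)})%type.

Definition cadj (p q : cvert) : bool :=
  match p, q with
  | inl a, inl b => pan_adj r a b
  | inl a, inr x => attached r (tag x) a
  | inr x, inl a => attached r (tag x) a
  | inr x, inr y => (tag x == tag y) && H (tagged x) (tagged_as x y)
  end.

Definition u (a : nat) : cvert := inl (inord a).
Definition hv (i : 'I_r.+1) (x : 'I_(n i)) : cvert := inr (Tagged (fun j => 'I_(n j)) x).

Definition cdeg (v : cvert) : nat := deg cadj v.
Definition cmaxdeg (i : 'I_r.+1) : nat := \max_(x : 'I_(n i)) cdeg (hv x).
Definition cmindeg (i : 'I_r.+1) : nat := \big[minn/#|cvert|]_(x : 'I_(n i)) cdeg (hv x).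
End Corona.

From mathcomp Require Import all_boot zify.
Set Implicit Arguments. Unset Strict Implicit. Unset Printing Implicit Defensive.

(* Label the edges by their rank under a priority.  Lowest come the edges at
   u_0, then the edges inside H_0, H_1, ..., H_r (graph by graph), then the
   spokes joining an H_i to the cycle vertices (the spokes from H_0 to u_r
   first, then grouped by cycle vertex and, for a fixed cycle vertex, by the
   position of the H-vertex), and last the cycle edges, ordered by the sum of
   their end indices.  Inside each H_i the vertices are positioned by
   increasing sum of their labels of the first two kinds; these labels do not
   depend on the positions, so this is not circular.  The vertex sums then
   increase strictly along u_0, the vertices of H_0, ..., H_r in position
   order, u_1, ..., u_r: u_0 has the fewest and smallest labels (c); a vertex
   of a later H_i has at least as many internal labels, each larger, by (a)
   and (b), and within an H_i the sorting takes care of them, while the spoke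
   labels always increase strictly; u_1 has two cycle edges and, by (d), at
   least as many spokes as any H-vertex has internal edges; finally u_(j+1)
   beats u_j because its cycle edges have larger index sums and, the n_i being
   nondecreasing, it has at least as many spokes, each with a larger label. *)

(** * Sums and rank labellings *)

Section SumComparison.
Variables (I J : finType) (P : pred I) (Q : pred J) (g : I -> nat) (h : J -> nat).

(* Both sums are compared with [#|P| * max g]. *)
Lemma ltn_sum_dominated x0 : P x0 ->
  \sum_(x | P x) 1 <= \sum_(y | Q y) 1 -> (forall x y, P x -> Q y -> g x < h y) ->
  \sum_(x | P x) g x < \sum_(y | Q y) h y.
Proof.
move=> Px0 card_le g_lt_h.
have [x1 Px1 max_g] : exists2 x1, P x1 & \max_(x | P x) g x = g x1.
  by exists [arg max_(i > x0 | P i) g i]; [case: arg_maxnP | apply: bigmax_eq_arg].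
have le_g : \sum_(x | P x) g x <= (\sum_(x | P x) 1) * g x1.
  by rewrite big_distrl /=; apply: leq_sum => x Px; rewrite mul1n -max_g leq_bigmax_cond.
have ge_h : (\sum_(y | Q y) 1) * (g x1).+1 <= \sum_(y | Q y) h y.
  by rewrite big_distrl /=; apply: leq_sum => y Qy; rewrite mul1n g_lt_h.
have pos_P : 0 < \sum_(x | P x) 1 by rewrite (bigD1 x0).
apply: leq_trans ge_h; apply: leq_ltn_trans le_g _; nia.
Qed.

Lemma leq_sum_dominated :
  \sum_(x | P x) 1 <= \sum_(y | Q y) 1 -> (forall x y, P x -> Q y -> g x < h y) ->
  \sum_(x | P x) g x <= \sum_(y | Q y) h y.
Proof.
move=> card_le g_lt_h.
case: (pickP P) => [x0 Px0|P0]; first exact/ltnW/(ltn_sum_dominated Px0).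
by rewrite big_pred0.
Qed.
End SumComparison.

Lemma leq_sum_subpred (T : finType) (P Q : pred T) (F : T -> nat) :
  (forall x, P x -> Q x) -> \sum_(x | P x) F x <= \sum_(x | Q x) F x.
Proof. by move=> sub; apply: (@sub_le_big _ addn leq) => // m k; apply: leq_addr. Qed.

Lemma bigmin_leq (T : finType) (g : T -> nat) d y : \big[minn/d]_(x : T) g x <= g y.
Proof.
have : y \in index_enum T by rewrite mem_index_enum.
elim: (index_enum T) => // a s IH; rewrite inE big_cons => /orP[/eqP <-|ys].
  exact: geq_minl.
exact: leq_trans (geq_minr _ _) (IH ys).
Qed.

Section Ranking.
Variables (T : finType) (E : {set T}) (prio : T -> nat).

Definition rank_key (e : T) : nat := prio e * #|T| + enum_rank e.
Definition rank (e : T) : nat := #|[set e' in E | rank_key e' < rank_key e]|.+1.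

Lemma rank_key_inj : injective rank_key.
Proof.
move=> e e' eq_key; apply: enum_rank_inj; apply: val_inj.
have := congr1 (modn^~ #|T|) eq_key.
by rewrite /rank_key !modnMDl !modn_small.
Qed.

Lemma rank_key_lt e e' : prio e < prio e' -> rank_key e < rank_key e'.
Proof.
move=> lt; rewrite /rank_key; apply: (@leq_trans ((prio e).+1 * #|T|)).
  by rewrite mulSn addnC ltn_add2r.
by apply: leq_trans (leq_addr _ _); apply: leq_mul.
Qed.

Lemma rank_key_prio e e' : rank_key e < rank_key e' -> prio e <= prio e'.
Proof. by move=> lt; rewrite leqNgt; apply/negP => /rank_key_lt; rewrite ltnNge (ltnW lt). Qed.

Lemma rank_lt_key e e' : e \in E -> rank_key e < rank_key e' -> rank e < rank e'.
Proof.
move=> eE lt; rewrite ltnS; apply: proper_card; apply/properP; split.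
  by apply/subsetP => x; rewrite !inE => /andP[-> /ltn_trans->].
by exists e; rewrite !inE ?eE ?lt // ltnn.
Qed.

Lemma rank_lt e e' : e \in E -> prio e < prio e' -> rank e < rank e'.
Proof. by move=> eE /rank_key_lt; apply: rank_lt_key. Qed.

Lemma rank_prio e e' : e' \in E -> rank e < rank e' -> prio e <= prio e'.
Proof.
move=> e'E lt; apply: rank_key_prio; case: (ltngtP (rank_key e) (rank_key e')) => // [gt|eq].
  by have := rank_lt_key e'E gt; rewrite ltnNge (ltnW lt).
by rewrite (rank_key_inj eq) ltnn in lt.
Qed.

Lemma rank_inj : {in E &, injective rank}.
Proof.
move=> e e' eE e'E eq_rank; apply: rank_key_inj.
case: (ltngtP (rank_key e) (rank_key e')) => // lt.
- by have := rank_lt_key eE lt; rewrite eq_rank ltnn.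
- by have := rank_lt_key e'E lt; rewrite eq_rank ltnn.
Qed.

Lemma rank_bound e : e \in E -> 0 < rank e <= #|E|.
Proof.
move=> eE; rewrite /rank (cardsD1 e E) eE add1n ltnS; apply: subset_leq_card.
apply/subsetP => x; rewrite !inE => /andP[-> lt]; rewrite andbT.
by apply: contraTneq lt => ->; rewrite ltnn.
Qed.
End Ranking.

(* The rank of [e] only sees the relative order of the keys below [t]. *)
Lemma rank_eq_below (T : finType) (E : {set T}) (p p' : T -> nat) t e :
  p e = p' e -> p e < t ->
  {in E, forall e', p e' = p' e' \/ t <= minn (p e') (p' e')} ->
  rank E p e = rank E p' e.
Proof.
move=> eq_e lt_t agree; congr _.+1; apply: eq_card => e'; rewrite !inE.
case: (boolP (e' \in E)) => //= e'E.
case: (agree e' e'E) => [eq_e'|]; first by rewrite /rank_key eq_e eq_e'.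
rewrite leq_min => /andP[ge ge'].
have lt1 : rank_key p e < rank_key p e' by apply: rank_key_lt; apply: leq_trans ge.
have lt2 : rank_key p' e < rank_key p' e'.
  by apply: rank_key_lt; rewrite -eq_e; apply: leq_trans ge'.
by rewrite ltnNge (ltnW lt1) ltnNge (ltnW lt2).
Qed.

Lemma inj_of_ltn_mono (T : Type) (g f : T -> nat) :
  injective g -> (forall p q, g p < g q -> f p < f q) -> injective f.
Proof.
move=> g_inj mono p q eq_f; apply: g_inj.
by case: (ltngtP (g p) (g q)) => // /mono; rewrite eq_f ltnn.
Qed.

Section SimpleGraph.
Variables (T : finType) (adj : rel T).

Lemma degE v : deg adj v = \sum_(y | adj v y) 1.
Proof. by rewrite /deg sum1_card cardsE. Qed.

Hypotheses (adj_sym : symmetric adj) (adj_irr : irreflexive adj).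

Lemma edges_pair x y : adj x y -> [set x; y] \in edges adj.
Proof.
by move=> xy; rewrite inE; apply/existsP; exists x; apply/existsP; exists y; rewrite xy eqxx.
Qed.

Lemma vsumE f v : vsum adj f v = \sum_(y | adj v y) f [set v; y].
Proof.
have inj : {in [pred y | adj v y] &, injective (fun y => [set v; y])}.
  move=> y y' /= vy vy' eq_e; have : y' \in [set v; y] by rewrite eq_e !inE eqxx orbT.
  by rewrite !inE => /orP[/eqP y'v|/eqP //]; move: vy'; rewrite inE y'v adj_irr.
rewrite /vsum -(big_imset (fun e => f e) inj) /=; apply: eq_bigl => e; apply/idP/idP.
- case/andP => /[dup] eE; rewrite inE => /existsP[x /existsP[y /andP[xy /eqP ->]]].
  rewrite !inE => /orP[/eqP ->|/eqP ->].
  + by apply/imsetP; exists y; rewrite ?inE.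
  + by apply/imsetP; exists x; rewrite ?inE 1?adj_sym // setUC.
- by case/imsetP => y; rewrite inE => vy ->; rewrite edges_pair // !inE eqxx.
Qed.

Lemma vsum_lt f v v' y0 : deg adj v <= deg adj v' -> adj v y0 -> y0 != v' ->
  (forall y y', adj v y -> y != v' -> adj v' y' -> y' != v -> f [set v; y] < f [set v'; y']) ->
  vsum adj f v < vsum adj f v'.
Proof.
move=> deg_le vy0 y0v' f_lt; rewrite !vsumE.
have split_at (a b : T) (G : T -> nat) : \sum_(y | adj a y) G y =
    (if adj a b then G b else 0) + \sum_(y | adj a y && (y != b)) G y.
  case: (boolP (adj a b)) => ab; first by rewrite (bigD1 b).
  by rewrite add0n; apply: eq_bigl => y; case: eqP => [->|]; rewrite ?(negbTE ab) ?andbT.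
rewrite (split_at v v') (split_at v' v) [adj v' v]adj_sym setUC ltn_add2l.
apply: (ltn_sum_dominated (x0 := y0)); first by rewrite vy0.
  by move: deg_le; rewrite !degE (split_at v v') (split_at v' v) [adj v' v]adj_sym leq_add2l.
by move=> y y' /andP[] + + /andP[]; apply: f_lt.
Qed.

Lemma antimagic_rank (prio : {set T} -> nat) :
  injective (vsum adj (rank (edges adj) prio)) -> antimagic adj.
Proof.
move=> w_inj; exists (rank (edges adj) prio); split => //.
- exact: rank_inj.
- by move=> e /rank_bound.
Qed.
End SimpleGraph.

Definition pair_prio (T : finType) (f : T -> T -> nat) (e : {set T}) : nat :=
  \max_(x in e) \max_(y in e | y != x) f x y.

Lemma pair_prio2 (T : finType) (f : T -> T -> nat) p q :
  f p q = f q p -> p != q -> pair_prio f [set p; q] = f p q.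
Proof.
move=> f_sym pq; rewrite /pair_prio big_setU1 ?inE // big_set1.
have max_other a b : a != b -> \max_(y in [set a; b] | y != a) f a y = f a b.
  move=> ab; rewrite (big_pred1 b) // => y; rewrite !inE.
  by apply/andP/eqP => [[/orP[/eqP -> |/eqP //]]|->]; rewrite ?eqxx // orbT eq_sym.
by rewrite max_other // setUC max_other 1?eq_sym //= -f_sym maxnn.
Qed.

Definition lex3 (K b c d : nat) : nat := (b * K + c) * K + d.

Section Lex3.
Variable K : nat.

Lemma lex3_ltb b b' c c' d d' : b < b' -> c < K -> d < K -> lex3 K b c d < lex3 K b' c' d'.
Proof. rewrite /lex3; nia. Qed.
Lemma lex3_ltc b c c' d d' : c < c' -> d < K -> lex3 K b c d < lex3 K b c' d'.
Proof. rewrite /lex3; nia. Qed.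
Lemma lex3_ltd b c d d' : d < d' -> lex3 K b c d < lex3 K b c d'.
Proof. rewrite /lex3; nia. Qed.
Lemma lex3_le0 b c d : lex3 K b 0 0 <= lex3 K b c d.
Proof. rewrite /lex3; nia. Qed.
Lemma lex3_gt0 b c d : 0 < K -> 0 < b -> 0 < lex3 K b c d.
Proof. rewrite /lex3; nia. Qed.
End Lex3.

Lemma lex3_le_lt K b c c' d d' : c <= c' -> d < d' -> d < K -> lex3 K b c d < lex3 K b c' d'.
Proof.
rewrite leq_eqVlt => /orP[/eqP <- dd' _|cc' _ dK]; first exact: lex3_ltd.
exact: lex3_ltc.
Qed.

(** * The pan graph *)

Definition pan_arith (r a b : nat) : bool :=
  [|| upair a b 0 r, upair a b 1 2, upair a b r.-1 r,
      (1 <= a <= r - 2) && (b == a + 2) | (1 <= b <= r - 2) && (a == b + 2)].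

Lemma pan_adjE r a b : pan_adj r a b = pan_arith r a b.
Proof.
rewrite /pan_adj /pan_arith; congr [|| _, _, _ | _]; apply/existsP/idP.
- case=> j /andP[j_mid]; rewrite /upair.
  by case/orP => /andP[/eqP -> /eqP ->]; rewrite j_mid eqxx ?orbT.
- case/orP => /andP[mid /eqP ->].
  + have a_lt : a < r.+1 by lia.
    by exists (Ordinal a_lt); rewrite /= mid /upair !eqxx.
  + have b_lt : b < r.+1 by lia.
    by exists (Ordinal b_lt); rewrite /= mid /upair !eqxx orbT.
Qed.

Lemma upairC a b c d : upair a b c d = upair b a c d.
Proof. by rewrite /upair orbC andbC [(a == c) && _]andbC. Qed.

Lemma pan_adj_sym r a b : pan_adj r a b = pan_adj r b a.
Proof. by rewrite !pan_adjE /pan_arith !(upairC a b); congr [|| _, _, _ | _]; apply: orbC. Qed.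

Lemma pan_adj_irr r a : 3 <= r -> pan_adj r a a = false.
Proof. by move=> r_ge3; rewrite pan_adjE /pan_arith /upair !orbb; apply/negP; lia. Qed.

(* For [1 <= j <= r], the cycle neighbours of [u_j] are [u_(nbr_lo j)] and
   [u_(nbr_hi r j)], and the graphs attached to [u_j], other than [H_0], are
   [H_(att_lo j)] and [H_(att_hi r j)]. *)
Definition nbr_lo (j : nat) : nat := if j == 1 then 2 else if j == 2 then 1 else j - 2.
Definition nbr_hi (r j : nat) : nat := if j == r then r.-1 else if j == r.-1 then r else j + 2.
Definition att_lo (j : nat) : nat := maxn 1 j.-1.
Definition att_hi (r j : nat) : nat := minn r j.+1.

Lemma pan_adj_hub r j b : 3 <= r -> 1 <= j <= r -> b <= r ->
  pan_adj r j b = [|| b == nbr_lo j, b == nbr_hi r j | (j == r) && (b == 0)].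
Proof.
move=> r_ge3 j_hub b_le; rewrite pan_adjE /pan_arith /upair /nbr_lo /nbr_hi.
by apply/idP/idP; do ! case: ifP; lia.
Qed.

Lemma attached_hub r i j : 3 <= r -> 1 <= j <= r -> i <= r ->
  attached r i j && (i != 0) = (i == att_lo j) || (i == att_hi r j).
Proof.
move=> r_ge3 j_hub i_le; rewrite /attached /attach_edge /att_lo /att_hi.
by apply/idP/idP; do ! case: ifP => /=; lia.
Qed.

Lemma attach_edge_hubs r i : 3 <= r -> 1 <= i <= r ->
  [/\ 1 <= (attach_edge r i).1, (attach_edge r i).1 < (attach_edge r i).2
    & (attach_edge r i).2 <= r].
Proof. by move=> r_ge3 i_pos; rewrite /attach_edge; do ! case: ifP => /=; move=> *; split; lia. Qed.

Lemma attach_edge_mono r i i' : 3 <= r -> 1 <= i <= i' -> i' <= r ->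
  (attach_edge r i).1 <= (attach_edge r i').1 /\ (attach_edge r i).2 <= (attach_edge r i').2.
Proof. by move=> r_ge3 ii' i'_le; rewrite /attach_edge; do ! case: ifP => /=; lia. Qed.

Lemma pan_adj_sum r a b a' b' : 3 <= r -> 0 < a -> 0 < b -> 0 < a' -> 0 < b' ->
  pan_adj r a b -> pan_adj r a' b' -> a + b = a' + b' -> upair a b a' b'.
Proof. by move=> r_ge3 ? ? ? ?; rewrite !pan_adjE /pan_arith /upair; lia. Qed.

Lemma nbr_lo_hub r j : 3 <= r -> 1 <= j <= r -> 0 < nbr_lo j <= r /\ pan_adj r j (nbr_lo j).
Proof.
move=> r_ge3 j_hub; have lo_hub : 0 < nbr_lo j <= r by rewrite /nbr_lo; do ! case: ifP => /=; lia.
by rewrite pan_adj_hub ?eqxx //; lia.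
Qed.

Lemma nbr_hi_hub r j : 3 <= r -> 1 <= j <= r -> 0 < nbr_hi r j <= r /\ pan_adj r j (nbr_hi r j).
Proof.
move=> r_ge3 j_hub; have hi_hub : 0 < nbr_hi r j <= r by rewrite /nbr_hi; do ! case: ifP => /=; lia.
by rewrite pan_adj_hub ?eqxx ?orbT //; lia.
Qed.

(** * The corona and its labelling *)

Section Corona.
Variables (r : nat) (n : 'I_r.+1 -> nat) (H : forall i : 'I_r.+1, rel 'I_(n i)).
Arguments H : clear implicits.
Hypothesis r_ge3 : 3 <= r.
Hypothesis H_simple : forall i, simple_graph (H i).
Hypothesis n_ge2 : forall i, 2 <= n i.
Hypothesis n_mono : forall i j : 'I_r.+1, i <= j -> n i <= n j.
Hypothesis deg_H0_H1 : maxdeg (H ord0) < mindeg (H (inord 1)).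
Hypothesis deg_Hi_Hi1 :
  forall i : 'I_r.+1, 1 <= i <= r.-1 -> maxdeg (H i) <= mindeg (H (inord i.+1)).
Hypothesis deg_u0 : forall i, cdeg H (u n 0) <= cmindeg H i.
Hypothesis deg_u1 : cmaxdeg H ord_max <= cdeg H (u n 1).

Local Notation V := (cvert n).
Local Notation adj := (cadj H).
Local Notation HV := {i : 'I_r.+1 & 'I_(n i)}.
Local Notation tg x := (Tagged (fun j => 'I_(n j)) x).

Lemma cadj_sym : symmetric adj.
Proof.
case=> [a|[i x]] [b|[j y]] //=; first exact: pan_adj_sym.
case: (eqVneq i j) => // ij; subst j.
by rewrite !tagged_asE; apply: (H_simple i).1.
Qed.

Lemma cadj_irr : irreflexive adj.
Proof.
case=> [a|[i x]] /=; first exact: pan_adj_irr.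
by rewrite eqxx tagged_asE (H_simple i).2.
Qed.

Lemma cadj_neq p q : adj p q -> p != q.
Proof. by apply: contraTneq => ->; rewrite cadj_irr. Qed.

Lemma u_val (a : 'I_r.+1) : u n a = inl a.
Proof. by rewrite /u inord_val. Qed.

Lemma adj_hv_u i (x : 'I_(n i)) e : e <= r -> adj (hv x) (u n e) = attached r i e.
Proof. by move=> e_le; rewrite /= inordK. Qed.

Lemma adj_u_u a b : a <= r -> b <= r -> adj (u n a) (u n b) = pan_adj r a b.
Proof. by move=> a_le b_le; rewrite /= !inordK. Qed.

Lemma adj_u_inl j (b : 'I_r.+1) : j <= r -> adj (u n j) (inl b) = pan_adj r j b.
Proof. by move=> j_le; rewrite /= inordK. Qed.

Lemma adj_u_inr j (z : HV) : j <= r -> adj (u n j) (inr z) = attached r (tag z) j.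
Proof. by move=> j_le; rewrite /= inordK. Qed.

Lemma sum_cvert (P : pred V) (G : V -> nat) :
  \sum_(p | P p) G p = \sum_(a | P (inl a)) G (inl a) + \sum_(z | P (inr z)) G (inr z).
Proof. exact: big_sumType. Qed.

Lemma sum_tag (P : pred HV) (G : HV -> nat) :
  \sum_(z | P z) G z = \sum_(i : 'I_r.+1) \sum_(x : 'I_(n i) | P (tg x)) G (tg x).
Proof.
rewrite (sig_big_dep xpredT (fun i (x : 'I_(n i)) => P (tg x)) (fun i x => G (tg x))) /=.
by apply: eq_big => -[i x].
Qed.

Lemma sum_hv_inr i (x : 'I_(n i)) (G : HV -> nat) :
  \sum_(z | adj (hv x) (inr z)) G z = \sum_(y | H i x y) G (tg y).
Proof.
rewrite sum_tag (bigD1 i) //= [X in _ + X]big1 ?addn0.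
  by apply: eq_bigl => y; rewrite eqxx tagged_asE.
move=> j ji; rewrite big_pred0 // => y /=.
by case: eqP => // ij; rewrite ij eqxx in ji.
Qed.

Lemma sum_tag_card (P : pred 'I_r.+1) : \sum_(z : HV | P (tag z)) 1 = \sum_(i | P i) n i.
Proof.
rewrite sum_tag [RHS]big_mkcond /=; apply: eq_bigr => i _.
by case: (P i); [rewrite sum1_card card_ord | rewrite big_pred0].
Qed.

Lemma sum_ord2 (G : 'I_r.+1 -> nat) (p q : nat) : p <= r -> q <= r -> p != q ->
  \sum_(a : 'I_r.+1 | (a == p :> nat) || (a == q :> nat)) G a = G (inord p) + G (inord q).
Proof.
move=> p_le q_le pq; rewrite (bigD1 (inord p)) /=; last by rewrite inordK ?eqxx.
congr (_ + _); apply: big_pred1 => a /=; rewrite -val_eqE /= inordK //.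
apply/andP/eqP => [[/orP[/eqP -> |/eqP aq]]|->]; first by rewrite eqxx.
  by move=> _; apply: val_inj; rewrite /= inordK.
by rewrite inordK // eqxx orbT eq_sym.
Qed.

Lemma card_hv_hubs i (x : 'I_(n i)) : \sum_(a | adj (hv x) (inl a)) 1 = 2.
Proof.
have [e1_le e2_le e12] : [/\ (attach_edge r i).1 <= r, (attach_edge r i).2 <= r
                          & (attach_edge r i).1 != (attach_edge r i).2].
  by have := ltn_ord i; rewrite /attach_edge; do ! case: ifP => /=; move=> *; split; lia.
by rewrite (eq_bigl (fun a : 'I_r.+1 => attached r i a)) // (sum_ord2 (fun _ => 1)).
Qed.

Lemma cdeg_hv i (x : 'I_(n i)) : cdeg H (hv x) = 2 + deg (H i) x.
Proof. by rewrite /cdeg degE sum_cvert card_hv_hubs (sum_hv_inr x (fun _ => 1)) degE. Qed.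

Lemma sum_u_hubs j (G : 'I_r.+1 -> nat) : 1 <= j <= r ->
  \sum_(b | adj (u n j) (inl b)) G b =
  (if j == r then G ord0 else 0) + (G (inord (nbr_lo j)) + G (inord (nbr_hi r j))).
Proof.
move=> j_hub; have nbr_le : nbr_lo j <= r /\ nbr_hi r j <= r /\ nbr_lo j != nbr_hi r j.
  by rewrite /nbr_lo /nbr_hi; do ! case: ifP => /=; lia.
have adjE (b : 'I_r.+1) : adj (u n j) (inl b) =
    [|| b == nbr_lo j :> nat, b == nbr_hi r j :> nat | (j == r) && (b == 0 :> nat)].
  have b_le : (b : nat) <= r by rewrite -ltnS.
  by rewrite adj_u_inl ?pan_adj_hub //; lia.
have b_le (b : 'I_r.+1) : (b : nat) <= r by rewrite -ltnS.
rewrite (bigID (fun b : 'I_r.+1 => b == ord0)); congr (_ + _).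
  rewrite (eq_bigl (fun b => (j == r) && (b == ord0))) => [|b].
    by case: (j == r); rewrite ?big_pred1_eq ?big_pred0.
  move: (b_le b); rewrite adjE -val_eqE /= /nbr_lo /nbr_hi.
  by do ! case: ifP => /=; move=> *; apply/idP/idP; lia.
rewrite -(sum_ord2 G); try lia; apply: eq_bigl => b.
move: (b_le b); rewrite adjE -val_eqE /= /nbr_lo /nbr_hi.
by do ! case: ifP => /=; move=> *; apply/idP/idP; lia.
Qed.

Lemma card_u_hubs j : 1 <= j < r -> \sum_(b | adj (u n j) (inl b)) 1 = 2.
Proof. by move=> j_mid; rewrite (sum_u_hubs (fun _ => 1)) ?ltn_eqF //; lia. Qed.

Lemma deg_le_maxdeg i x : deg (H i) x <= maxdeg (H i).
Proof. exact: (@leq_bigmax _ (fun x => deg (H i) x)). Qed.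

Lemma mindeg_le_deg i x : mindeg (H i) <= deg (H i) x.
Proof. exact: (bigmin_leq (fun x => deg (H i) x)). Qed.

Lemma mindeg_le_maxdeg i : mindeg (H i) <= maxdeg (H i).
Proof.
have n_pos : 0 < n i by apply: leq_trans (n_ge2 i).
exact: leq_trans (mindeg_le_deg (Ordinal n_pos)) (deg_le_maxdeg _).
Qed.

Lemma maxdeg_le_mindeg (i j : 'I_r.+1) : 1 <= i -> i < j -> maxdeg (H i) <= mindeg (H j).
Proof.
move=> i_pos ij; have j_le : (j : nat) <= r by rewrite -ltnS.
have -> : j = inord (i + (j - i).-1.+1) by apply: val_inj; rewrite /= inordK; lia.
have : i + (j - i).-1.+1 <= r by lia.
elim: (j - i).-1 => [|k IH] k_le; first by rewrite addn1; apply: deg_Hi_Hi1; lia.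
have mid_le : i + k.+1 <= r by lia.
apply: leq_trans (IH mid_le) _; apply: leq_trans (mindeg_le_maxdeg _) _.
have -> : (inord (i + k.+2) : 'I_r.+1) = inord (inord (i + k.+1) : 'I_r.+1).+1.
  by apply: val_inj; rewrite /= !inordK // -addSnnS; lia.
by apply: deg_Hi_Hi1; rewrite inordK; lia.
Qed.

Lemma deg_lt_tag (i i' : 'I_r.+1) x x' : i < i' ->
  deg (H i) x + (i == 0 :> nat) <= deg (H i') x'.
Proof.
move=> ii'; have one_val : (inord 1 : 'I_r.+1) = 1 :> nat by rewrite inordK; lia.
case: (eqVneq (i : nat) 0) => [i0|i_pos]; last first.
  rewrite addn0; apply: leq_trans (deg_le_maxdeg _) (leq_trans _ (mindeg_le_deg x')).
  by apply: maxdeg_le_mindeg; rewrite // lt0n.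
rewrite addn1; apply: leq_ltn_trans (deg_le_maxdeg _) _.
have -> : i = ord0 by apply: val_inj.
apply: leq_trans deg_H0_H1 _.
case: (eqVneq (i' : nat) 1) => [i'1|i'1].
  have -> : (inord 1 : 'I_r.+1) = i' by apply: val_inj; rewrite /= one_val i'1.
  exact: mindeg_le_deg.
apply: leq_trans (mindeg_le_maxdeg _) (leq_trans _ (mindeg_le_deg x')).
by apply: maxdeg_le_mindeg; rewrite one_val //; lia.
Qed.

Lemma maxdeg_le_last (i : 'I_r.+1) : maxdeg (H i) <= maxdeg (H ord_max).
Proof.
have pos_case (j : 'I_r.+1) : 1 <= j -> maxdeg (H j) <= maxdeg (H ord_max).
  move=> j_pos; case: (ltngtP j r) => [jr|rj|jr].
  - exact: leq_trans (@maxdeg_le_mindeg j ord_max j_pos jr) (mindeg_le_maxdeg _).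
  - by have := ltn_ord j; rewrite ltnS leqNgt rj.
  - by have -> : j = ord_max by apply: val_inj.
case: (posnP i) => [i0|]; last exact: pos_case.
have -> : i = ord0 by apply: val_inj.
apply: leq_trans (ltnW deg_H0_H1) (leq_trans (mindeg_le_maxdeg _) (pos_case _ _)).
by rewrite inordK; lia.
Qed.

Lemma cdeg_hv_le_u1 i (x : 'I_(n i)) : cdeg H (hv x) <= cdeg H (u n 1).
Proof.
apply: leq_trans deg_u1; rewrite cdeg_hv.
have y0 : 'I_(n ord_max) by exists 0; apply: leq_trans (n_ge2 _).
have cdeg_le y : 2 + deg (H ord_max) y <= cmaxdeg H ord_max.
  by rewrite -cdeg_hv; apply: (@leq_bigmax _ (fun y => cdeg H (hv y))).
have : maxdeg (H ord_max) <= cmaxdeg H ord_max - 2.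
  by apply/bigmax_leqP => y _; have := cdeg_le y; lia.
have := cdeg_le y0; have := deg_le_maxdeg x; have := maxdeg_le_last i; lia.
Qed.

Section Labelling.
Variable pos : forall i : 'I_r.+1, 'I_(n i) -> nat.

Definition offset (i : 'I_r.+1) : nat := \sum_(k < r.+1 | k < i) n k.
Definition idx (z : HV) : nat := offset (tag z) + pos (tagged z).
Definition lex_base : nat := \sum_(k < r.+1) n k + r.*2.+1.

Definition spoke_prio (a : 'I_r.+1) (z : HV) : nat :=
  if a == 0 :> nat then 0 else lex3 lex_base 2 (if tag z == 0 :> nat then 0 else a) (idx z).

Definition eprio (p q : V) : nat :=
  match p, q with
  | inl a, inl b => if (a == 0 :> nat) || (b == 0 :> nat) then 0 else lex3 lex_base 3 (a + b) 0
  | inl a, inr z | inr z, inl a => spoke_prio a z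
  | inr z, inr z' => lex3 lex_base 1 (maxn (tag z) (tag z')) 0
  end.

Definition lab : {set V} -> nat := rank (edges adj) (pair_prio eprio).
Definition elab (p q : V) : nat := lab [set p; q].
Definition w (p : V) : nat := vsum adj lab p.

Lemma eprioC p q : eprio p q = eprio q p.
Proof. by case: p q => [a|z] [b|z'] //=; rewrite (orbC, maxnC) // addnC. Qed.

Lemma elabC p q : elab p q = elab q p.
Proof. by rewrite /elab setUC. Qed.

Lemma pair_prio_edge p q : adj p q -> pair_prio eprio [set p; q] = eprio p q.
Proof. by move=> pq; apply: pair_prio2; [apply: eprioC | apply: cadj_neq]. Qed.

Lemma elab_lt p q p' q' : adj p q -> adj p' q' -> eprio p q < eprio p' q' -> elab p q < elab p' q'.
Proof.
by move=> pq p'q' lt; apply: rank_lt; rewrite ?edges_pair // !pair_prio_edge.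
Qed.

Lemma wE p : w p = \sum_(y | adj p y) elab p y.
Proof. exact: (vsumE cadj_sym cadj_irr). Qed.

Hypothesis pos_bound : forall i (x : 'I_(n i)), 0 < pos x <= n i.

Lemma offset_tag_lt (i i' : 'I_r.+1) : i < i' -> offset i + n i <= offset i'.
Proof.
move=> ii'; rewrite /offset [X in _ <= X](bigD1 i) //= addnC leq_add2l.
by apply: leq_sum_subpred => k ki; rewrite (ltn_trans ki) // -val_eqE (ltn_eqF ki).
Qed.

Lemma offset_le_total (i : 'I_r.+1) : offset i + n i <= \sum_(k < r.+1) n k.
Proof.
rewrite /offset [X in _ <= X](bigD1 i) //= addnC leq_add2l.
by apply: leq_sum_subpred => k ki; rewrite -val_eqE (ltn_eqF ki).
Qed.

Lemma idx_gt0 z : 0 < idx z.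
Proof. by case: z => i x; rewrite /idx addn_gt0 (proj1 (andP (pos_bound x))) orbT. Qed.

Lemma idx_le_total z : idx z <= \sum_(k < r.+1) n k.
Proof.
case: z => i x; apply: leq_trans (offset_le_total i).
by rewrite /idx leq_add2l (proj2 (andP (pos_bound x))).
Qed.

Lemma idx_lt_lex_base z : idx z < lex_base.
Proof. by rewrite /lex_base addnS ltnS (leq_trans (idx_le_total z)) ?leq_addr. Qed.

Lemma lex_base_pos : 0 < lex_base.
Proof. by rewrite /lex_base addnS. Qed.

Lemma double_r_lt_lex_base : r.*2 < lex_base.
Proof. by rewrite /lex_base addnS ltnS leq_addl. Qed.

Lemma idx_lt_tag (z z' : HV) : tag z < tag z' -> idx z < idx z'.
Proof.
case: z z' => [i x] [i' x'] /= ii'; rewrite /idx /=.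
apply: (@leq_trans (offset i' + 1)); last by rewrite leq_add2l (proj1 (andP (pos_bound x'))).
rewrite addn1 ltnS; apply: leq_trans (offset_tag_lt ii').
by rewrite leq_add2l (proj2 (andP (pos_bound x))).
Qed.

Lemma eprio_u0 y : eprio (u n 0) y = 0.
Proof. by case: y => [b|z]; rewrite /= /spoke_prio inordK. Qed.

Lemma adj_u0_ur : adj (u n 0) (u n r).
Proof. by rewrite /= !inordK // pan_adjE /pan_arith /upair !eqxx. Qed.

Definition low (p y : V) : bool := eprio p y < lex3 lex_base 2 0 0.
Definition wlow (p : V) : nat := \sum_(y | adj p y && low p y) elab p y.
Definition whigh (p : V) : nat := \sum_(y | adj p y && ~~ low p y) elab p y.

Lemma w_split p : w p = wlow p + whigh p.
Proof. by rewrite wE (bigID (low p)). Qed.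

Lemma low_hv_inl i (x : 'I_(n i)) a : low (hv x) (inl a) = (a == 0 :> nat).
Proof.
rewrite /low /= /spoke_prio; case: eqP => _; first exact: lex3_gt0 lex_base_pos _.
by apply/negbTE; rewrite -leqNgt lex3_le0.
Qed.

Lemma low_hv_inr i (x : 'I_(n i)) z : low (hv x) (inr z).
Proof.
apply: lex3_ltb => //; last exact: lex_base_pos.
apply: leq_ltn_trans double_r_lt_lex_base; rewrite -addnn geq_max.
by apply/andP; split; apply: leq_trans (leq_addr _ _); rewrite -ltnS.
Qed.

Lemma eprio_low_hv i (x : 'I_(n i)) y : adj (hv x) y -> low (hv x) y ->
  eprio (hv x) y <= lex3 lex_base 1 i 0 /\ (i != 0 :> nat -> eprio (hv x) y = lex3 lex_base 1 i 0).
Proof.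
case: y => [a|[j y]].
- rewrite low_hv_inl /= /attached /attach_edge => xa /eqP a0; rewrite /spoke_prio a0.
  split=> // i0; move: xa; rewrite a0 (negbTE i0).
  by do ! case: ifP => /=; lia.
- by rewrite /= => /andP[/eqP ji _] _; subst j; rewrite maxnn.
Qed.

Lemma card_low_hv i (x : 'I_(n i)) :
  \sum_(y | adj (hv x) y && low (hv x) y) 1 = deg (H i) x + (i == 0 :> nat).
Proof.
rewrite big_sumType addnC; congr (_ + _); last first.
  rewrite (eq_bigl (fun z => adj (hv x) (inr z))) => [|z]; last by rewrite low_hv_inr andbT.
  by rewrite (sum_hv_inr x (fun _ => 1)) degE.
rewrite (eq_bigl (fun a : 'I_r.+1 => attached r i a && (a == 0 :> nat))) => [|a]; last first.
  by rewrite low_hv_inl.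
case: (eqVneq (i : nat) 0) => [i0|i0].
- rewrite (big_pred1 ord0) // => a /=; rewrite /attached /attach_edge i0 /= -val_eqE.
  by apply/idP/idP => [/andP[_ ->] //|/eqP ->].
- rewrite big_pred0 // => a /=; apply/negP => /andP[].
  rewrite /attached /attach_edge (negbTE i0) => + /eqP a0; rewrite a0.
  by do ! case: ifP => /=; lia.
Qed.

Lemma eprio_hv_u i (x : 'I_(n i)) e : 1 <= e <= r ->
  eprio (hv x) (u n e) = lex3 lex_base 2 (if i == 0 :> nat then 0 else e) (idx (tg x)).
Proof. by case/andP=> e_pos e_le; rewrite /= /spoke_prio inordK // (gtn_eqF e_pos). Qed.

Lemma whigh_hv i (x : 'I_(n i)) :
  whigh (hv x) = \sum_(a : 'I_r.+1 | attached r i a && (a != 0 :> nat)) elab (hv x) (inl a).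
Proof.
rewrite /whigh big_sumType /= [X in _ + X]big_pred0 => [|z]; last by rewrite low_hv_inr andbF.
by rewrite addn0; apply: eq_bigl => a; rewrite low_hv_inl.
Qed.

Lemma whigh_hv0 i (x : 'I_(n i)) : i = 0 :> nat -> whigh (hv x) = elab (hv x) (u n r).
Proof.
move=> i0; rewrite whigh_hv (big_pred1 (inord r)) // => a /=.
rewrite /attached /attach_edge i0 /= -val_eqE /= inordK //.
by apply/andP/idP => [[/orP[/eqP -> //|]]|/eqP ->]; rewrite ?eqxx ?orbT; lia.
Qed.

Lemma whigh_hvS i (x : 'I_(n i)) : i != 0 :> nat ->
  whigh (hv x) = elab (hv x) (u n (attach_edge r i).1) + elab (hv x) (u n (attach_edge r i).2).
Proof.
move=> i0; have i_hub : 1 <= i <= r by rewrite lt0n i0 -ltnS ltn_ord.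
have [e1_pos e12 e2_le] := attach_edge_hubs r_ge3 i_hub.
rewrite whigh_hv -(sum_ord2 (fun a => elab (hv x) (inl a))) ?(ltn_eqF e12) //; last first.
  exact: ltnW (leq_trans e12 e2_le).
apply: eq_bigl => a; rewrite /attached.
by apply/andP/idP => [[-> //]|/orP[]/eqP ->]; split; rewrite ?eqxx ?orbT //; lia.
Qed.

Lemma whigh_hv_lt i i' (x : 'I_(n i)) (x' : 'I_(n i')) :
  i <= i' -> idx (tg x) < idx (tg x') -> whigh (hv x) < whigh (hv x').
Proof.
move=> ii' lt_idx.
have spoke_lt e e' : 1 <= e <= r -> 1 <= e' <= r ->
    (i == 0 :> nat) || (e <= e') && (i' != 0 :> nat) ->
    attached r i e -> attached r i' e' -> elab (hv x) (u n e) < elab (hv x') (u n e').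
  move=> e_hub e'_hub c_le xe x'e'; apply: elab_lt; rewrite ?adj_hv_u //; try lia.
  rewrite !eprio_hv_u //.
  by apply: lex3_le_lt (idx_lt_lex_base _) => //; do ! case: eqP => /=; lia.
have [i'0|i'0] := eqVneq (i' : nat) 0.
  have i0 : i = 0 :> nat by lia.
  by rewrite !whigh_hv0 //; apply: spoke_lt;
    rewrite /attached /attach_edge ?i0 ?i'0 ?eqxx ?orbT //; lia.
have i'_hub : 1 <= i' <= r by rewrite lt0n i'0 -ltnS ltn_ord.
have [e1_pos e12 e2_le] := attach_edge_hubs r_ge3 i'_hub.
rewrite (whigh_hvS x' i'0); have [i0|i0] := eqVneq (i : nat) 0.
  by rewrite whigh_hv0 // ltn_addr //; apply: spoke_lt; rewrite ?i0 /attached ?eqxx //; lia.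
have i_hub : 1 <= i <= r by rewrite lt0n i0 -ltnS ltn_ord.
have [f1_pos f12 f2_le] := attach_edge_hubs r_ge3 i_hub.
have [le1 le2] := attach_edge_mono r_ge3 (i := i) (i' := i') (ltac:(lia)) (ltac:(by rewrite -ltnS)).
have lt1 : elab (hv x) (u n (attach_edge r i).1) < elab (hv x') (u n (attach_edge r i').1).
  by apply: spoke_lt; rewrite /attached ?eqxx ?orbT ?i'0 //; lia.
have lt2 : elab (hv x) (u n (attach_edge r i).2) < elab (hv x') (u n (attach_edge r i').2).
  by apply: spoke_lt; rewrite /attached ?eqxx ?orbT ?i'0 //; lia.
rewrite (whigh_hvS x i0); lia.
Qed.

Lemma w_u0_lt_hv i (x : 'I_(n i)) : w (u n 0) < w (hv x).
Proof.
apply: (vsum_lt cadj_sym cadj_irr (y0 := u n r)) => //.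
- exact: leq_trans (deg_u0 i) (bigmin_leq (fun x => cdeg H (hv x)) _ x).
- exact: adj_u0_ur.
move=> y [b|z] u0y _ xy' y'_u0; apply: elab_lt => //; rewrite eprio_u0 /= /spoke_prio.
- case: eqP => [b0|_]; last exact: lex3_gt0 lex_base_pos _.
  by case/eqP: y'_u0; congr inl; apply: val_inj; rewrite /= b0 inordK.
- exact: lex3_gt0 lex_base_pos _.
Qed.

Hypothesis pos_sorted :
  forall i (x x' : 'I_(n i)), pos x < pos x' -> wlow (hv x) <= wlow (hv x').

Lemma wlow_hv_tag i i' (x : 'I_(n i)) (x' : 'I_(n i')) : i < i' -> wlow (hv x) <= wlow (hv x').
Proof.
move=> ii'; have i'0 : i' != 0 :> nat by rewrite -lt0n (leq_ltn_trans _ ii').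
apply: leq_sum_dominated.
  by rewrite !card_low_hv (negbTE i'0) addn0 deg_lt_tag.
move=> y y' /andP[xy low_y] /andP[x'y' low_y']; apply: elab_lt => //.
have [le_y _] := eprio_low_hv xy low_y; have [_ ->] := eprio_low_hv x'y' low_y' => //.
exact: leq_ltn_trans le_y (lex3_ltc _ _ ii' lex_base_pos).
Qed.

Lemma w_hv_lt i i' (x : 'I_(n i)) (x' : 'I_(n i')) :
  idx (tg x) < idx (tg x') -> w (hv x) < w (hv x').
Proof.
move=> lt_idx; have ii' : i <= i'.
  by rewrite leqNgt; apply/negP => /(@idx_lt_tag (tg x') (tg x)); rewrite ltnNge (ltnW lt_idx).
rewrite !w_split -addnS; apply: leq_add; last exact: whigh_hv_lt.
case: (ltngtP i i') ii' => // [lt _|eq _]; first exact: wlow_hv_tag.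
have ii : i = i' by apply: val_inj.
subst i'; by apply: pos_sorted; move: lt_idx; rewrite /idx /= ltn_add2l.
Qed.

Lemma eprio_u_u a b : 0 < a <= r -> 0 < b <= r -> eprio (u n a) (u n b) = lex3 lex_base 3 (a + b) 0.
Proof. by move=> /andP[a_pos a_le] /andP[b_pos b_le]; rewrite /= !inordK // !gtn_eqF. Qed.

Lemma eprio_u_spoke k (z : HV) : 1 <= k <= r -> tag z != 0 :> nat ->
  eprio (u n k) (inr z) = lex3 lex_base 2 k (idx z).
Proof. by move=> /andP[k_pos k_le] /negbTE z0; rewrite /= /spoke_prio inordK // z0 gtn_eqF. Qed.

Lemma spoke_prio_lt a z : spoke_prio a z < lex3 lex_base 3 0 0.
Proof.
rewrite /spoke_prio; case: eqP => _; first exact: lex3_gt0 lex_base_pos _.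
apply: lex3_ltb (idx_lt_lex_base _) => //; case: eqP => _; first exact: lex_base_pos.
by apply: leq_ltn_trans double_r_lt_lex_base; rewrite -addnn (leq_trans _ (leq_addr _ _)) // -ltnS.
Qed.

Lemma w_hv_lt_u1 i (x : 'I_(n i)) : w (hv x) < w (u n 1).
Proof.
have e1_le : (attach_edge r i).1 <= r.
  by have := ltn_ord i; rewrite /attach_edge; do ! case: ifP => /=; move=> *; lia.
rewrite !wE !sum_cvert -addSn; apply: leq_add.
  apply: (ltn_sum_dominated (x0 := inord (attach_edge r i).1)).
  - by rewrite -[inl _]/(u n _) adj_hv_u // /attached eqxx.
  - by rewrite card_hv_hubs card_u_hubs //; lia.
  - move=> a b xa u1b; have b_hub : 0 < b <= r.
      rewrite -[_ <= r]ltnS ltn_ord andbT lt0n; apply: contraTneq u1b => b0.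
      by rewrite adj_u_inl ?b0 ?pan_adjE /pan_arith /upair; lia.
    apply: elab_lt => //; rewrite -[inl b]u_val eprio_u_u //; last by lia.
    exact: leq_trans (spoke_prio_lt a (tg x)) (lex3_le0 _ _ _ _).
apply: leq_sum_dominated.
  by have := cdeg_hv_le_u1 x; rewrite /cdeg !degE !sum_cvert card_hv_hubs card_u_hubs //; lia.
move=> z z' xz u1z'; apply: elab_lt => //.
apply: leq_trans (low_hv_inr x z) _.
by rewrite /= /spoke_prio inordK //=; [apply: lex3_le0 | lia].
Qed.

Lemma elab_hubs_le a b a' b' : 0 < a <= r -> 0 < b <= r -> 0 < a' <= r -> 0 < b' <= r ->
  pan_adj r a b -> pan_adj r a' b' -> a + b <= a' + b' ->
  elab (u n a) (u n b) <= elab (u n a') (u n b').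
Proof.
move=> a_hub b_hub a'_hub b'_hub ab a'b'; rewrite leq_eqVlt => /orP[/eqP sum_eq|sum_lt].
  have : upair a b a' b' by apply: pan_adj_sum ab a'b' sum_eq; lia.
  by case/orP => /andP[/eqP -> /eqP ->]; rewrite // elabC.
apply/ltnW/elab_lt; rewrite ?adj_u_u ?eprio_u_u //; try lia.
exact: lex3_ltc sum_lt lex_base_pos.
Qed.

Lemma card_u_spokes j : 1 <= j <= r ->
  \sum_(z : HV | attached r (tag z) j && (tag z != 0 :> nat)) 1 =
  n (inord (att_lo j)) + n (inord (att_hi r j)).
Proof.
move=> j_hub; rewrite (sum_tag_card (fun i : 'I_r.+1 => attached r i j && (i != 0 :> nat))).
rewrite -sum_ord2; first by apply: eq_bigl => i; rewrite attached_hub // -ltnS.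
all: by rewrite /att_lo /att_hi; lia.
Qed.

Lemma sum_spokes_lt j : 1 <= j < r ->
  \sum_(z | adj (u n j) (inr z)) elab (u n j) (inr z) <
  \sum_(z | adj (u n j.+1) (inr z)) elab (u n j.+1) (inr z).
Proof.
move=> j_mid; have j_le : j <= r by lia.
have adj_spoke k (z : HV) : 1 <= k <= r ->
    adj (u n k) (inr z) && (tag z != 0 :> nat) = attached r (tag z) k && (tag z != 0 :> nat).
  by move=> k_hub; rewrite adj_u_inr //; lia.
have spoke_nz (z : HV) : adj (u n j) (inr z) -> tag z != 0 :> nat.
  rewrite adj_u_inr // => att; apply: contraTneq att => z0.
  by rewrite /attached /attach_edge z0 /=; lia.
pose nz_spokes z := adj (u n j.+1) (inr z) && (tag z != 0 :> nat).
apply: (@leq_trans (\sum_(z | nz_spokes z) elab (u n j.+1) (inr z))); last first.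
  by apply: leq_sum_subpred => z /andP[].
  have lo_pos : 0 < n (inord (att_lo j)) by apply: leq_trans (n_ge2 _).
  apply: (ltn_sum_dominated (x0 := tg (Ordinal lo_pos))).
  - rewrite adj_u_inr //=; have lo_le : att_lo j <= r by rewrite /att_lo; lia.
    have := @attached_hub r (att_lo j) j r_ge3 (ltac:(lia)) lo_le; rewrite eqxx => /andP[].
    by rewrite inordK.
  - have card_j : \sum_(z | adj (u n j) (inr z)) 1 = n (inord (att_lo j)) + n (inord (att_hi r j)).
      rewrite -card_u_spokes; try lia; apply: eq_bigl => z.
      by rewrite -adj_spoke; try lia; case: (boolP (adj _ _)) => // /spoke_nz ->.
    have card_j1 : \sum_(z | adj (u n j.+1) (inr z) && (tag z != 0 :> nat)) 1 =
                   n (inord (att_lo j.+1)) + n (inord (att_hi r j.+1)).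
      by rewrite -card_u_spokes; try lia; apply: eq_bigl => z; apply: adj_spoke; lia.
    rewrite card_j card_j1; apply: leq_add; apply: n_mono; rewrite !inordK /att_lo /att_hi; lia.
  - move=> z z' jz /andP[j1z' z'0]; apply: elab_lt => //.
    rewrite !eprio_u_spoke ?(spoke_nz z jz) //; try lia.
    exact: lex3_ltc (ltnSn j) (idx_lt_lex_base _).
Qed.

Lemma w_u_lt_succ j : 1 <= j < r -> w (u n j) < w (u n j.+1).
Proof.
move=> j_mid; rewrite !wE !sum_cvert -addnS; apply: leq_add; last exact: sum_spokes_lt.
rewrite (sum_u_hubs (fun b => elab (u n j) (inl b)))
        ?(sum_u_hubs (fun b => elab (u n j.+1) (inl b))).
all: try lia.
rewrite ifF ?add0n; last by lia.
have [lo_j pan_lo_j] := @nbr_lo_hub r j r_ge3 (ltac:(lia)).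
have [hi_j pan_hi_j] := @nbr_hi_hub r j r_ge3 (ltac:(lia)).
have [lo_j1 pan_lo_j1] := @nbr_lo_hub r j.+1 r_ge3 (ltac:(lia)).
have [hi_j1 pan_hi_j1] := @nbr_hi_hub r j.+1 r_ge3 (ltac:(lia)).
apply: leq_trans (leq_addl _ _); apply: leq_add; apply: elab_hubs_le => //; try lia.
all: by rewrite /nbr_lo /nbr_hi; do ! case: ifP => /=; move=> *; lia.
Qed.

Lemma w_hub_lt a b : 1 <= a < b -> b <= r -> w (u n a) < w (u n b).
Proof.
case/andP=> a_pos; elim: b => // b IH; rewrite ltnS leq_eqVlt => /orP[/eqP <-|ab] b_le.
  by apply: w_u_lt_succ; lia.
by apply: ltn_trans (IH _ _) (w_u_lt_succ _); lia.
Qed.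

Lemma w_hv_lt_hub i (x : 'I_(n i)) b : 1 <= b <= r -> w (hv x) < w (u n b).
Proof.
move=> b_hub; apply: leq_trans (w_hv_lt_u1 x) _.
by case: (eqVneq b 1) => [->//|b1]; apply/ltnW/w_hub_lt; lia.
Qed.

(* [w] increases along u_0, then the vertices of the H_i by [idx], then u_1, ..., u_r. *)
Definition vorder (p : V) : nat :=
  match p with inl a => if a == 0 :> nat then 0 else lex_base + a | inr z => idx z end.

Hypothesis pos_inj : forall i, injective (@pos i).

Lemma idx_inj : injective idx.
Proof.
move=> [i x] [i' x'] eq_idx; have ii' : i = i'.
  apply: val_inj; case: (ltngtP i i') => // lt.
  - by have := @idx_lt_tag (tg x) (tg x') lt; rewrite eq_idx ltnn.
  - by have := @idx_lt_tag (tg x') (tg x) lt; rewrite eq_idx ltnn.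
subst i'; congr existT; apply: (@pos_inj i); move: eq_idx; rewrite /idx /=; apply: addnI.
Qed.

Lemma vorder_inj : injective vorder.
Proof.
move=> [a|z] [b|z'] /=.
- have := lex_base_pos; case: eqP => a0; case: eqP => b0 base_gt0 /= eq_ab;
    by congr inl; apply: ord_inj; lia.
- by have := idx_gt0 z'; have := idx_lt_lex_base z'; case: eqP; lia.
- by have := idx_gt0 z; have := idx_lt_lex_base z; case: eqP; lia.
- by move/idx_inj ->.
Qed.

Lemma w_mono p q : vorder p < vorder q -> w p < w q.
Proof.
have hub (a : 'I_r.+1) : (a : nat) != 0 -> 1 <= a <= r.
  by rewrite -[_ <= r]ltnS ltn_ord lt0n andbT.
have y0 : 'I_(n ord0) by exists 0; apply: leq_trans (n_ge2 _).
case: p q => [a|z] [b|z'] /=.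
- rewrite -[inl a]u_val -[inl b]u_val.
  case: eqP => [a0|/eqP a0]; case: eqP => [b0|/eqP b0] //; rewrite ?ltn_add2l => ab.
    by rewrite a0; apply: ltn_trans (w_u0_lt_hv y0) (w_hv_lt_hub y0 (hub _ b0)).
  have [a_pos _] := andP (hub _ a0); have [_ b_le] := andP (hub _ b0).
  by apply: w_hub_lt; rewrite ?a_pos ?ab.
- rewrite -[inl a]u_val; case: eqP => [a0 _|_].
    by rewrite a0; case: z' => i x; apply: w_u0_lt_hv.
  by have := idx_lt_lex_base z'; lia.
- rewrite -[inl b]u_val; case: eqP => [b0|/eqP b0]; first by have := idx_gt0 z; lia.
  by case: z => i x _; apply: w_hv_lt_hub (hub _ b0).
- by case: z z' => [i x] [i' x']; apply: w_hv_lt.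
Qed.

Lemma antimagic_corona : antimagic adj.
Proof. exact: (antimagic_rank (prio := pair_prio eprio) (inj_of_ltn_mono vorder_inj w_mono)). Qed.
End Labelling.

Lemma eprio_pos_indep pos pos' p q :
  eprio pos p q = eprio pos' p q \/ lex3 lex_base 2 0 0 <= minn (eprio pos p q) (eprio pos' p q).
Proof.
have spoke a z : spoke_prio pos a z = spoke_prio pos' a z \/
    lex3 lex_base 2 0 0 <= minn (spoke_prio pos a z) (spoke_prio pos' a z).
  rewrite /spoke_prio; case: eqP => _; first by left.
  by right; rewrite leq_min !lex3_le0.
by case: p q => [a|z] [b|z'] /=; [left | apply: spoke | apply: spoke | left].
Qed.

(* The low labels never depend on [pos], so [pos] may be chosen to sort them. *)
Lemma wlow_pos_indep pos pos' i (x : 'I_(n i)) : wlow pos (hv x) = wlow pos' (hv x).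
Proof.
rewrite /wlow; apply: eq_big => [[a|z]|y /andP[xy low_y]]; rewrite ?low_hv_inl ?low_hv_inr //.
have eq_y : eprio pos (hv x) y = eprio pos' (hv x) y.
  by case: y xy low_y => [a|z] //; rewrite low_hv_inl /= /spoke_prio => _ ->.
rewrite /elab /lab; apply: (rank_eq_below (t := lex3 lex_base 2 0 0)).
- by rewrite !pair_prio_edge.
- by rewrite pair_prio_edge.
move=> e; rewrite inE => /existsP[p /existsP[q /andP[pq /eqP ->]]].
by rewrite !pair_prio_edge //; apply: eprio_pos_indep.
Qed.
End Corona.

Theorem theorem1 (r : nat) (n : 'I_r.+1 -> nat)
    (H : forall i : 'I_r.+1, rel 'I_(n i)) :
  3 <= r ->
  (forall i, simple_graph (H i)) ->
  (forall i, connected_graph (H i)) ->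
  (forall i, 2 <= n i) ->
  (forall i j : 'I_r.+1, i <= j -> n i <= n j) ->
  (* (a) *) maxdeg (H ord0) < mindeg (H (inord 1)) ->
  (* (b) *) (forall i : 'I_r.+1, 1 <= i <= r.-1 -> maxdeg (H i) <= mindeg (H (inord i.+1))) ->
  (* (c) *) (forall i : 'I_r.+1, cdeg H (u n 0) <= cmindeg H i) ->
  (* (d) *) cmaxdeg H ord_max <= cdeg H (u n 1) ->
  antimagic (cadj H).
Proof.
move=> r_ge3 H_simple _ n_ge2 n_mono deg_H0_H1 deg_Hi_Hi1 deg_u0 deg_u1.
pose low_sum i (x : 'I_(n i)) := wlow H (fun _ _ => 0) (hv x).
pose sorted_pos i := rank [set: 'I_(n i)] (@low_sum i).
have low_sumE i (x : 'I_(n i)) : wlow H sorted_pos (hv x) = low_sum i x.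
  exact: wlow_pos_indep.
apply: (antimagic_corona r_ge3 H_simple n_ge2 n_mono deg_H0_H1 deg_Hi_Hi1 deg_u0 deg_u1
         (pos := sorted_pos)) => [i x | i x x' | i].
- by have := rank_bound (@low_sum i) (in_setT x); rewrite cardsT card_ord.
- by rewrite !low_sumE; apply: rank_prio; rewrite inE.
- by move=> x x'; apply: rank_inj; rewrite inE.
Qed.
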